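(* Let $K\ge1$, $n\ge1$, $\delta\in(0,1)$, $\ell_K=\sum_{k=1}^K1/k$, and $s\in\{1,\dots,K\}$. Define the half-widths $$h_{\mathrm e}(s)=\sqrt{\frac{\log\left(\frac{2K}{\delta s}\right)}{2n}}\cdot\frac{\log\left(\frac{2}{\delta}\right)+\log\left(\frac{2K}{\delta s}\right)}{2\sqrt{\log\left(\frac{2}{\delta}\right)\log\left(\frac{2K}{\delta s}\right)}},\qquad h(s)=\sqrt{\frac{\log\left(\frac{2K\ell_K}{\delta s}\right)}{2n}},$$ which are the half-widths of the intervals $C^{\delta\text{-}\mathrm{Hoef}}(\delta s/K)$ and $C^{\mathrm{Hoef}}(\delta s/(K\ell_K))$ centered at the sample mean. If $$s\ge\frac{K}{\exp\left(2\sqrt{\log\left(\frac{2}{\delta}\right)\log\ell_K}\right)},$$ then $h_{\mathrm e}(s)\le h(s)$, i.e. $C^{\delta\text{-}\mathrm{Hoef}}(\delta s/K)$ is as tight as or tighter than $C^{\mathrm{Hoef}}(\delta s/(K\ell_K))$.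
   Context: Given $n$ i.i.d. samples in $[0,1]$ with sample mean $\hat\mu_n$, $C^{\alpha'\text{-}\mathrm{Hoef}}(\alpha)=\left(\hat\mu_n\pm\sqrt{\frac{\log(2/\alpha)}{2n}}\cdot\frac{\log(2/\alpha)+\log(2/\alpha')}{2\sqrt{\log(2/\alpha')\log(2/\alpha)}}\right)$ (used here with $\alpha'=\delta$) and $C^{\mathrm{Hoef}}(\alpha)=\left(\hat\mu_n\pm\sqrt{\frac{\log(2/\alpha)}{2n}}\right)$. Here $s$ plays the role of the size $|S|$ of the selected set. *)

From Stdlib Require Import Reals.
Open Scope R_scope.

Fixpoint harmonic (K : nat) : R :=
  match K with
  | O => 0
  | S k => harmonic k + / INR (S k)
  end.

From Stdlib Require Import Reals Lra Lia.
Open Scope R_scope.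

(* Put a = log(2/δ), c = log(K/s), L = log ℓ_K and b = a + c, so that the
   two logarithms in the statement are b and b + L.  The factor
   (a + b) / (2 √(ab)) turns √(b/2n) into √((b + (b - a)² / 4a) / 2n), hence
   the claim amounts to c² ≤ 4aL, i.e. c ≤ 2 √(aL), which is the hypothesis
   on s after taking logarithms. *)

Lemma harmonic_ge_1 (K : nat) : (1 <= K)%nat -> 1 <= harmonic K.
Proof.
  induction K as [|K IH]; intros HK; [lia|].
  change (harmonic (S K)) with (harmonic K + / INR (S K)).
  destruct K as [|K].
  - simpl. rewrite Rinv_1. lra.
  - assert (0 < / INR (S (S K))) by (apply Rinv_0_lt_compat, lt_0_INR; lia).
    specialize (IH ltac:(lia)). lra.
Qed.

Lemma ln_le (x y : R) : 0 < x -> x <= y -> ln x <= ln y.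
Proof.
  intros Hx [Hlt | ->]; [left; now apply ln_increasing | right; reflexivity].
Qed.

Lemma ln_ge_0 (x : R) : 1 <= x -> 0 <= ln x.
Proof. intros Hx. rewrite <- ln_1. apply ln_le; lra. Qed.

Lemma ln_div_le_of_ge_div_exp (x y t : R) :
  0 < x -> 0 < y -> y >= x / exp t -> ln (x / y) <= t.
Proof.
  intros Hx Hy Hyt.
  assert (Het : 0 < exp t) by apply exp_pos.
  rewrite <- (ln_exp t). apply ln_le.
  - now apply Rdiv_lt_0_compat.
  - apply (Rmult_le_reg_r y); [lra|].
    apply (Rmult_le_reg_r (/ exp t)); [now apply Rinv_0_lt_compat|].
    replace (x / y * y * / exp t) with (x / exp t) by (field; lra).
    replace (exp t * y * / exp t) with y by (field; lra).
    lra.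
Qed.

Lemma sqrt_mul_mean_ratio (a b x : R) : 0 < a -> 0 < b -> 0 < x ->
  sqrt (b / x) * ((a + b) / (2 * sqrt (a * b)))
  = sqrt ((b + (b - a) ^ 2 / (4 * a)) / x).
Proof.
  intros Ha Hb Hx.
  assert (Hbx : 0 <= b / x) by (apply Rlt_le, Rdiv_lt_0_compat; lra).
  assert (Hab : 0 < sqrt (a * b)) by (apply sqrt_lt_R0; nra).
  symmetry. apply sqrt_lem_1.
  - apply Rlt_le, Rdiv_lt_0_compat; [|lra].
    assert (0 <= (b - a) ^ 2 / (4 * a)) by (apply Rle_mult_inv_pos; [apply pow2_ge_0 | lra]).
    lra.
  - apply Rmult_le_pos; [apply sqrt_pos|].
    apply Rlt_le, Rdiv_lt_0_compat; lra.
  - replace (sqrt (b / x) * ((a + b) / (2 * sqrt (a * b))) *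
             (sqrt (b / x) * ((a + b) / (2 * sqrt (a * b)))))
      with (sqrt (b / x) * sqrt (b / x) * (a + b) ^ 2 /
            (4 * (sqrt (a * b) * sqrt (a * b)))) by (field; lra).
    rewrite !sqrt_sqrt by nra.
    field. lra.
Qed.

Lemma halfwidth_le (a c L x : R) : 0 < a -> 0 <= c -> 0 <= L -> 0 < x ->
  c <= 2 * sqrt (a * L) ->
  sqrt ((a + c) / x) * ((a + (a + c)) / (2 * sqrt (a * (a + c))))
  <= sqrt ((a + c + L) / x).
Proof.
  intros Ha Hc HL Hx HcaL.
  rewrite sqrt_mul_mean_ratio by lra.
  apply sqrt_le_1_alt.
  assert (Hc2 : c ^ 2 <= 4 * (a * L)).
  { assert (HaL : sqrt (a * L) * sqrt (a * L) = a * L) by (apply sqrt_sqrt; nra).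
    nra. }
  unfold Rdiv. apply Rmult_le_compat_r; [apply Rlt_le, Rinv_0_lt_compat; lra|].
  replace (a + c - a) with c by ring.
  assert (c ^ 2 * / (4 * a) <= L).
  { apply (Rmult_le_reg_r (4 * a)); [lra|].
    replace (c ^ 2 * / (4 * a) * (4 * a)) with (c ^ 2) by (field; lra).
    lra. }
  lra.
Qed.

Theorem proposition6 (K n s : nat) (delta : R) :
  (1 <= K)%nat -> (1 <= n)%nat -> 0 < delta < 1 ->
  (1 <= s)%nat -> (s <= K)%nat ->
  INR s >= INR K / exp (2 * sqrt (ln (2 / delta) * ln (harmonic K))) ->
  sqrt (ln (2 * INR K / (delta * INR s)) / (2 * INR n)) *
    ((ln (2 / delta) + ln (2 * INR K / (delta * INR s))) /
     (2 * sqrt (ln (2 / delta) * ln (2 * INR K / (delta * INR s)))))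
  <= sqrt (ln (2 * INR K * harmonic K / (delta * INR s)) / (2 * INR n)).
Proof.
  intros HK Hn Hdelta Hs HsK Hs_large.
  assert (PK : 0 < INR K) by (apply lt_0_INR; lia).
  assert (Ps : 0 < INR s) by (apply lt_0_INR; lia).
  assert (Pn : 0 < INR n) by (apply lt_0_INR; lia).
  assert (Hell := harmonic_ge_1 K HK).
  assert (Ha : 0 < ln (2 / delta)).
  { rewrite <- ln_1. apply ln_increasing; [lra|].
    apply (Rmult_lt_reg_r delta); [lra|]. field_simplify; lra. }
  assert (Hc : 0 <= ln (INR K / INR s)).
  { apply ln_ge_0, (Rmult_le_reg_r (INR s)); [lra|].
    replace (INR K / INR s * INR s) with (INR K) by (field; lra).
    rewrite Rmult_1_l. now apply le_INR. }
  assert (Eb : ln (2 * INR K / (delta * INR s)) = ln (2 / delta) + ln (INR K / INR s)).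
  { rewrite <- ln_mult by (apply Rdiv_lt_0_compat; lra). f_equal. field. lra. }
  assert (EbL : ln (2 * INR K * harmonic K / (delta * INR s))
                = ln (2 / delta) + ln (INR K / INR s) + ln (harmonic K)).
  { rewrite <- Eb, <- ln_mult by (try apply Rdiv_lt_0_compat; nra).
    f_equal. field. lra. }
  rewrite Eb, EbL.
  apply halfwidth_le; try lra.
  - now apply ln_ge_0.
  - now apply ln_div_le_of_ge_div_exp.
Qed.
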